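(* Let $a\in[-1,1)$. Let $M_2=\big(\int_{-1}^1t^{i+j}\,dt\big)_{0\le i,j\le2}$ and $v_a^{(2)}=\big(1-a,\ \tfrac{1-a^2}{2},\ \tfrac{1-a^3}{3}\big)^\top$. Then the linear equation $M_2x=v_a^{(2)}$ has a solution $x\in(0,\infty)^3$ if and only if $0<a<\frac{\sqrt{105}-5}{10}$. *)

From Stdlib Require Import Reals.
From Coquelicot Require Import Coquelicot.
Open Scope R_scope.

Definition M2 (i j : nat) : R := RInt (fun t => t ^ (i + j)) (-1) 1.

Definition v2 (a : R) (i : nat) : R := (1 - a ^ (S i)) / INR (S i).

(* Since the odd moments vanish, the system decouples and has the unique solution
     x0 = (1 - a)(4 - 5a - 5a^2)/8,  x1 = 3(1 - a^2)/4,  x2 = 15a(1 - a^2)/8.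
   For -1 <= a < 1, positivity of x1 excludes a = -1, after which x2 > 0 means
   a > 0 and x0 > 0 means 5a^2 + 5a - 4 < 0, i.e. a below the positive root
   (sqrt 105 - 5)/10 of that quadratic. *)
From Stdlib Require Import Reals Lra Lia.
From Coquelicot Require Import Coquelicot.
Open Scope R_scope.

Lemma M2_moment (i j : nat) :
  M2 i j = 1 / INR (S (i + j)) - (-1) ^ S (i + j) / INR (S (i + j)).
Proof.
  unfold M2. rewrite (is_RInt_unique _ _ _ _ (is_RInt_pow _ _ _)), pow1.
  reflexivity.
Qed.

Definition M2_solution (a : R) (j : nat) : R :=
  match j with
  | 0%nat => (1 - a) * (4 - 5 * a - 5 * a ^ 2) / 8
  | 1%nat => 3 * (1 - a ^ 2) / 4
  | _ => 15 * a * (1 - a ^ 2) / 8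
  end.

Lemma M2_rows (a : R) (x : nat -> R) :
  (forall i : nat, (i <= 2)%nat -> sum_f_R0 (fun j => M2 i j * x j) 2 = v2 a i)
  <-> 2 * x 0%nat + 2 / 3 * x 2%nat = 1 - a
      /\ 2 / 3 * x 1%nat = (1 - a ^ 2) / 2
      /\ 2 / 3 * x 0%nat + 2 / 5 * x 2%nat = (1 - a ^ 3) / 3.
Proof.
  assert (row : forall i, sum_f_R0 (fun j => M2 i j * x j) 2
     = M2 i 0 * x 0%nat + M2 i 1 * x 1%nat + M2 i 2 * x 2%nat) by reflexivity.
  split.
  - intros H.
    pose proof (H 0%nat ltac:(lia)) as E0.
    pose proof (H 1%nat ltac:(lia)) as E1.
    pose proof (H 2%nat ltac:(lia)) as E2.
    rewrite row, !M2_moment in E0, E1, E2.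
    unfold v2 in E0, E1, E2. simpl in E0, E1, E2. lra.
  - intros (E0 & E1 & E2) [|[|[|i]]] hi; try lia;
      rewrite row, !M2_moment; unfold v2; simpl; lra.
Qed.

Lemma M2_system_iff_solution (a : R) (x : nat -> R) :
  (forall i : nat, (i <= 2)%nat -> sum_f_R0 (fun j => M2 i j * x j) 2 = v2 a i)
  <-> x 0%nat = M2_solution a 0 /\ x 1%nat = M2_solution a 1
      /\ x 2%nat = M2_solution a 2.
Proof. rewrite M2_rows. simpl. split; intros; lra. Qed.

Lemma quadratic_pos_iff_below_root (a : R) :
  0 < a -> 0 < 4 - 5 * a - 5 * a ^ 2 <-> a < (sqrt 105 - 5) / 10.
Proof.
  intros ha.
  assert (Hs : sqrt 105 * sqrt 105 = 105) by (apply sqrt_sqrt; lra).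
  assert (Hs0 : 0 <= sqrt 105) by apply sqrt_pos.
  (* 4 - 5a - 5a^2 = -5 (a - r) (a + r + 1) with r = (sqrt 105 - 5) / 10 *)
  split; intros H; nra.
Qed.

Lemma M2_solution_pos_iff (a : R) : -1 <= a < 1 ->
  0 < M2_solution a 0 /\ 0 < M2_solution a 1 /\ 0 < M2_solution a 2
  <-> 0 < a /\ a < (sqrt 105 - 5) / 10.
Proof.
  intros ha. simpl.
  split.
  - intros (P0 & P1 & P2).
    assert (Ha : 0 < a) by nra.
    split; [exact Ha|].
    apply quadratic_pos_iff_below_root; nra.
  - intros [Ha Hr].
    apply quadratic_pos_iff_below_root in Hr; [|exact Ha].
    repeat split; nra.
Qed.

Theorem lemma4p1 (a : R) (ha : -1 <= a < 1) :
  (exists x : nat -> R,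
      0 < x 0%nat /\ 0 < x 1%nat /\ 0 < x 2%nat /\
      forall i : nat, (i <= 2)%nat ->
        sum_f_R0 (fun j => M2 i j * x j) 2 = v2 a i)
  <-> (0 < a /\ a < (sqrt 105 - 5) / 10).
Proof.
  rewrite <- (M2_solution_pos_iff a ha).
  split.
  - intros (x & P0 & P1 & P2 & Hsys).
    apply M2_system_iff_solution in Hsys as (X0 & X1 & X2).
    rewrite <- X0, <- X1, <- X2. auto.
  - intros (P0 & P1 & P2).
    exists (M2_solution a).
    repeat split; auto.
    apply M2_system_iff_solution. auto.
Qed.
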